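(* Consider the factorized (COM) cost model described in the context, applied to the join phase that follows a full semijoin reduction. In that phase every non-root node $i$ has match probability $m_i=1$ (and fanout $fo_i\ge 1$). Then all valid join orders of the instance have the same cost; that is, the cost is independent of the join order.
   Context: **Instance.** An instance consists of the following data. - A rooted tree $\mathcal{J}$ whose root $r$ is the driver relation (here, already fully reduced) and whose non-root nodes are join operators. - A number $N>0$, the driver cardinality. - For each non-root node $i$: a match probability $m_i\in[0,1]$, a fanout $fo_i\ge1$ (a real number), and a per-probe cost $c_i>0$. By convention $m_r=1$. **Valid join orders.** A valid join order is a sequence listing every non-root node exactly once, such that each node whose parent is not $r$ appears after its parent. **Survival probability.** Let $T$ be a connected set of nodes with top node $v$ (that is, $T$ contains $v$ and, for each of its members other than $v$, also that member's parent). Define recursively $$m_T=m_v\Big(1-\big(1-\prod_u m_{T_u}\big)^{fo_v}\Big).$$ The product ranges over the children $u$ of $v$ in $T$, and $T_u$ is the set of nodes of $T$ in the subtree rooted at $u$. An empty product equals $1$. **Number of probes.** Suppose node $l$ is placed when the set of already placed nodes is $S$, where $S$ contains $r$ and the earlier non-root nodes. Let $r=a_0,\dots,a_k$ be the proper ancestors of $l$, listed from the root down to its parent. Let $T(u,S)$ be the set of nodes of $S$ in the subtree rooted at $u$. Then $$\mathrm{probes}(l,S)=N\prod_{j=1}^{k}m_{a_j}fo_{a_j}\times\prod_{j=0}^{k}\prod_{u}m_{T(u,S)}.$$ Here the inner product is over the children $u$ of $a_j$ with $u\in S$ and $u\notin\{a_{j+1},l\}$. **Cost of an order.** The cost of a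 valid order $\sigma$ is $\sum_l c_l\,\mathrm{probes}(l,S_l)$, where $S_l$ is the set consisting of $r$ and the nodes preceding $l$ in $\sigma$. *)

From mathcomp Require Import all_boot all_order all_algebra.
From mathcomp Require Import reals exp.
Set Implicit Arguments. Unset Strict Implicit. Unset Printing Implicit Defensive.
Import Order.TTheory GRing.Theory Num.Theory.
Local Open Scope ring_scope.

Section COM.
Variables (R : realType) (T : finType) (r : T) (par : T -> T).

(* A rooted tree on the node type T: par is the parent map, the root r is
   its own "parent", and every node reaches r by iterating par. *)
Definition is_rooted_tree : Prop :=
  par r = r /\ forall x : T, exists k : nat, iter k par x = r.

Definition desc (u x : T) : bool :=
  [exists k : 'I_#|T|.+1, iter k par x == u].

Definition childS (S : {set T}) (v u : T) : bool :=
  [&& u \in S, par u == v & u != r].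

Variables (m fo c : T -> R) (N : R).

(* m_{T(v,S)}: survival probability of the connected set of nodes of S in the
   subtree rooted at v (top node v), computed recursively with fuel. *)
Fixpoint mT (k : nat) (S : {set T}) (v : T) : R :=
  match k with
  | 0 => m v
  | k'.+1 => m v * (1 - (1 - \prod_(u | childS S v u) mT k' S u) `^ fo v)
  end.

Definition mTS (S : {set T}) (u : T) : R := mT #|T| S u.

Definition proper_anc (l a : T) : bool := desc a l && (a != l).

Definition probes (l : T) (S : {set T}) : R :=
  N * (\prod_(a | proper_anc l a && (a != r)) (m a * fo a))
    * \prod_(a | proper_anc l a)
        \prod_(u | childS S a u && ~~ desc u l) mTS S u.

Definition valid_order (s : seq T) : Prop :=
  uniq s /\ (forall x, (x \in s) = (x != r)) /\
  (forall l, l \in s -> par l != r -> index (par l) s < index l s)%N.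

Definition placed (s : seq T) (i : nat) : {set T} :=
  r |: [set x in take i s].

Definition cost (s : seq T) : R :=
  \sum_(i < size s) c (nth r s i) * probes (nth r s i) (placed s i).

End COM.

(* When every non-root match probability is 1, the survival probability of any
   connected set topped by a non-root node is 1, because 1 - (1 - 1)^fo = 1 for
   fo > 0.  Hence the probe count of a node l reduces to N times the product of
   m_a fo_a over its proper non-root ancestors a, whatever nodes are already
   placed.  The cost of an order is then a sum of per-node terms, and any two
   valid orders list the same nodes, so the sums agree. *)
From mathcomp Require Import all_boot all_order all_algebra.
From mathcomp Require Import reals exp.
Set Implicit Arguments. Unset Strict Implicit. Unset Printing Implicit Defensive.
Import Order.TTheory GRing.Theory Num.Theory.
Local Open Scope ring_scope.

Section UnitMatchProbabilities.
Variables (R : realType) (T : finType) (r : T) (par : T -> T).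
Variables (m fo c : T -> R) (N : R).
Hypothesis fo_ge1 : forall i, i != r -> 1 <= fo i.
Hypothesis m_eq1 : forall i, i != r -> m i = 1.

Lemma mT_eq1 k S v : v != r -> mT r par m fo k S v = 1.
Proof.
elim: k S v => [|k IH] S v v_neq_r /=; first exact: m_eq1.
rewrite big1 => [|u /and3P[_ _ u_neq_r]]; last exact: IH.
have fo_neq0 : fo v != 0 by rewrite gt_eqF // (lt_le_trans ltr01) ?fo_ge1.
by rewrite subrr powR0 // subr0 mulr1 m_eq1.
Qed.

Lemma probesE l S :
  probes r par m fo N l S =
  N * \prod_(a | proper_anc par l a && (a != r)) (m a * fo a).
Proof.
rewrite /probes [X in _ * X]big1 ?mulr1 // => a _.
by apply: big1 => u /andP[/and3P[_ _ u_neq_r] _]; exact: mT_eq1.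
Qed.

Lemma cost_sum_nodes s :
  cost r par m fo c N s =
  \sum_(l <- s) c l * (N * \prod_(a | proper_anc par l a && (a != r)) (m a * fo a)).
Proof.
rewrite /cost (big_nth r) big_mkord.
by apply: eq_bigr => i _; rewrite probesE.
Qed.

End UnitMatchProbabilities.

Lemma valid_order_perm (T : finType) (r : T) (par : T -> T) (s1 s2 : seq T) :
  valid_order r par s1 -> valid_order r par s2 -> perm_eq s1 s2.
Proof.
move=> [uniq_s1 [mem_s1 _]] [uniq_s2 [mem_s2 _]].
by apply: uniq_perm => // x; rewrite mem_s1 mem_s2.
Qed.

Theorem theorem3p5 (R : realType) (T : finType) (r : T) (par : T -> T)
    (m fo c : T -> R) (N : R) :
  is_rooted_tree r par ->
  0 < N ->
  m r = 1 ->
  (forall i, i != r -> 0 <= m i <= 1) ->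
  (forall i, i != r -> 1 <= fo i) ->
  (forall i, i != r -> 0 < c i) ->
  (forall i, i != r -> m i = 1) ->
  forall s1 s2 : seq T,
    valid_order r par s1 -> valid_order r par s2 ->
    cost r par m fo c N s1 = cost r par m fo c N s2.
Proof.
move=> _ _ _ _ fo_ge1 _ m_eq1 s1 s2 valid_s1 valid_s2.
rewrite !cost_sum_nodes //.
exact: perm_big _ (valid_order_perm valid_s1 valid_s2).
Qed.
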